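(* Let $M$ be a known finite-horizon reward-free MDP, $\Pi\subseteq\Pi_{\mathrm{RNS}}$, $\varepsilon\in[0,1]$ and $h\in[H]$. Consider the procedure: set $T=\varepsilon^{-1}$; for $t=1,\dots,T$ compute $\pi^{(t)}\in\Pi$ with $$\mathbb{E}^{M,\pi^{(t)}}\Big[\frac{P^M_{h-1}(x_h\mid x_{h-1},a_{h-1})}{\sum_{i<t}d^{M,\pi^{(i)}}_h(x_h)+P^M_{h-1}(x_h\mid x_{h-1},a_{h-1})}\Big]\ge\sup_{\pi\in\Pi}\mathbb{E}^{M,\pi}\Big[\frac{P^M_{h-1}(x_h\mid x_{h-1},a_{h-1})}{\sum_{i<t}d^{M,\pi^{(i)}}_h(x_h)+P^M_{h-1}(x_h\mid x_{h-1},a_{h-1})}\Big]-\varepsilon_{\mathrm{opt}},$$ and return $p=\mathrm{Unif}(\pi^{(1)},\dots,\pi^{(T)})$. Whenever $\varepsilon_{\mathrm{opt}}\le C^M_{\mathrm{push};h}\cdot\varepsilon\log(2\varepsilon^{-1})$, the output $p\in\Delta(\Pi)$ satisfies $|\mathrm{supp}(p)|\le\varepsilon^{-1}$ and $$\Psi^M_{\mathrm{push};h,\varepsilon}(p)\le 5C^M_{\mathrm{push};h}\log(2\varepsilon^{-1}).$$ Consequently, if $p'$ is the distribution induced by sampling $\pi\sim p$ and executing $\pi\circ_h\pi_{\mathrm{unif}}$, then $\Psi^M_{h,\varepsilon}(p')\le 5|\mathcal{A}|C^M_{\mathrm{push};h}\log(2\varepsilon^{-1})$.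
   Context: Episodic reward-free MDP $M$ (countable states $\mathcal{X}$, actions $\mathcal{A}$, horizon $H$, transitions $P^M_h$). $\Pi_{\mathrm{RNS}}$: randomized non-stationary policies; $\pi_{\mathrm{unif}}$: uniform policy; $\pi\circ_h\pi'$ follows $\pi$ at layers $<h$ and $\pi'$ at layers $\ge h$. $d^{M,\pi}_h(x)$, $d^{M,\pi}_h(x,a)$: layer-$h$ occupancies; $d^{M,p}_h=\mathbb{E}_{\pi\sim p}d^{M,\pi}_h$. Definitions: $\Psi^M_{h,\varepsilon}(p)=\sup_{\pi\in\Pi}\mathbb{E}^{M,\pi}\big[\frac{d^{M,\pi}_h(x_h,a_h)}{d^{M,p}_h(x_h,a_h)+\varepsilon d^{M,\pi}_h(x_h,a_h)}\big]$; $\Psi^M_{\mathrm{push};h,\varepsilon}(p)=\sup_{\pi\in\Pi}\mathbb{E}^{M,\pi}\big[\frac{P^M_{h-1}(x_h\mid x_{h-1},a_{h-1})}{d^{M,p}_h(x_h)+\varepsilon P^M_{h-1}(x_h\mid x_{h-1},a_{h-1})}\big]$; $C^M_{\mathrm{push};h}=\inf_{\mu\in\Delta(\mathcal{X})}\sup_{(x,a,x')}\frac{P^M_{h-1}(x'\mid x,a)}{\mu(x')}$. *)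

From HB Require Import structures.
From mathcomp Require Import all_boot all_order all_algebra.
From mathcomp Require Import all_classical all_reals all_analysis.
Set Implicit Arguments. Unset Strict Implicit. Unset Printing Implicit Defensive.
Import Order.TTheory GRing.Theory Num.Theory.
Local Open Scope classical_set_scope.
Local Open Scope ring_scope.
Local Open Scope ereal_scope.

(* Layers are numbered 1, 2, ....  [init] is the law of x_1 and
   [trans h x a x'] = P_h(x' | x, a) is the transition from layer h to h+1
   (h >= 1).  Convention: P_0(x' | x, a) := init x' (for all x, a). *)
Record mdp (R : realType) (X : countType) (A : finType) := MDP {
  init : X -> R;
  trans : nat -> X -> A -> X -> R }.

Section Defs.
Variables (R : realType) (X : countType) (A : finType).

Definition is_dist (mu : X -> R) : Prop :=
  (forall x, (0 <= mu x)%R) /\ \esum_(x in [set: X]) (mu x)%:E = 1.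

Definition is_mdp (M : mdp R X A) : Prop :=
  is_dist (init M) /\ forall h x a, is_dist (trans M h x a).

(* randomized non-stationary (Markov) policy: pi h x a = pi_h(a | x) *)
Definition policy := nat -> X -> A -> R.

Definition is_policy (pi : policy) : Prop :=
  forall h x, (forall a, (0 <= pi h x a)%R) /\ (\sum_(a : A) pi h x a = 1)%R.

Variable M : mdp R X A.

Definition Pprev (h : nat) (x : X) (a : A) (x' : X) : R :=
  match h with
  | 0 => 0%R
  | S k => if k is S _ then trans M k x a x' else init M x'
  end.

Fixpoint occ (pi : policy) (h : nat) (x : X) : \bar R :=
  match h with
  | 0 => 0
  | S k => if k is S _ then
             \esum_(y in [set: X]) \sum_(a : A)
                occ pi k y * (pi k y a)%:E * (trans M k y a x)%:E
           else (init M x)%:E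
  end.

Definition occa (pi : policy) (h : nat) (x : X) (a : A) : \bar R :=
  occ pi h x * (pi h x a)%:E.

(* E^{M,pi}[ g(x_h, P_{h-1}(x_h | x_{h-1}, a_{h-1})) ] *)
Definition Epush (pi : policy) (h : nat) (g : X -> R -> \bar R) : \bar R :=
  match h with
  | 0 => 0
  | S k => if k is S _ then
             \esum_(y in [set: X]) \sum_(a : A) occ pi k y * (pi k y a)%:E *
               \esum_(x' in [set: X]) (trans M k y a x')%:E * g x' (trans M k y a x')
           else \esum_(x' in [set: X]) (init M x')%:E * g x' (init M x')
  end.

(* finitely supported distributions over policies, as weighted lists *)
Definition mixture := seq (R * policy).

Definition dmix (p : mixture) (h : nat) (x : X) : \bar R :=
  \sum_(wp <- p) (wp.1)%:E * occ wp.2 h x.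

Definition dmixa (p : mixture) (h : nat) (x : X) (a : A) : \bar R :=
  \sum_(wp <- p) (wp.1)%:E * occa wp.2 h x a.

Definition supp (p : mixture) : set policy :=
  [set pi | (0 < \sum_(wp <- p) (if `[< wp.2 = pi >] then wp.1 else 0))%R].

Definition Psi (Pi : set policy) (h : nat) (eps : R) (p : mixture) : \bar R :=
  ereal_sup [set \esum_(x in [set: X]) \sum_(a : A)
                  occa pi h x a * (occa pi h x a / (dmixa p h x a + eps%:E * occa pi h x a))
            | pi in Pi].

Definition Psi_push (Pi : set policy) (h : nat) (eps : R) (p : mixture) : \bar R :=
  ereal_sup [set Epush pi h (fun x q => q%:E / (dmix p h x + (eps * q)%:E)) | pi in Pi].

Definition Cpush (h : nat) : \bar R :=
  ereal_inf [set ereal_sup [set (Pprev h t.1.1 t.1.2 t.2)%:E / (mu t.2)%:E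
                           | t in [set: (X * A * X)%type]]
            | mu in [set mu | is_dist mu]].

Definition compose (pi pi' : policy) (h : nat) : policy :=
  fun l => if (l < h)%N then pi l else pi' l.

Definition pi_unif : policy := fun _ _ _ => (#|A|%:R)^-1%R.

Definition unif_mix (pis : nat -> policy) (T : nat) : mixture :=
  [seq (((T%:R)^-1)%R, pis t) | t <- iota 1 T].

Definition mix_unif_after (p : mixture) (h : nat) : mixture :=
  [seq (wp.1, compose wp.2 pi_unif h) | wp <- p].

Definition round_obj (pis : nat -> policy) (h t : nat) : X -> R -> \bar R :=
  fun x q => q%:E / (\sum_(1 <= i < t) occ (pis i) h x + q%:E).

End Defs.

From HB Require Import structures.
From mathcomp Require Import all_boot all_order all_algebra.
From mathcomp Require Import all_classical all_reals all_analysis.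
From mathcomp Require Import ring lra.
Import Order.TTheory GRing.Theory Num.Theory.
Local Open Scope classical_set_scope.
Local Open Scope ring_scope.
Local Open Scope ereal_scope.
Set Implicit Arguments. Unset Strict Implicit. Unset Printing Implicit Defensive.

(* Write d_t for the layer-h occupancy of pi^(t) and D_t = d_1 + ... + d_(t-1).
   The round objective E^pi[P / (D_t + P)] decreases with t, so the near-optimality
   of each pi^(t) bounds T E^pi[P / (D_(T+1) + P)] by the sum over t of
   E^(pi^(t))[P / (D_t + P)], plus T eps_opt.  If every transition row satisfies
   P(x') <= c mu(x'), this sum is at most
   sum_x sum_t d_t(x) c mu(x) / (D_t(x) + c mu(x)) <= 2 c ln (1 + T),
   an elliptic-potential bound at each state.  For the uniform mixture, Psi_push is
   exactly T E^pi[P / (D_(T+1) + P)]; after switching to uniform actions, Jensen's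
   inequality for q |-> q^2 / (D + q), applied to d^pi_h as a push-forward of the
   layer-(h-1) state-action occupancy, bounds Psi by |A| times the same quantity.
   Letting c decrease to C_push and using eps_opt <= C_push eps ln (2 / eps) gives
   the constant 5. *)

Section ExtendedSums.
Variable R : realType.

Lemma ediv_EFin (r s : R) : (0 <= r)%R -> (0 <= s)%R -> (s = 0 -> r = 0)%R ->
  r%:E / s%:E = (r / s)%:E.
Proof.
move=> r0 s0 sr; have [s00|sn0] := eqVneq s 0%R.
  by rewrite (sr s00) s00 inve0 mul0r mul0e.
by rewrite inver (negPf sn0) -EFinM.
Qed.

Lemma esumZl (T : choiceType) (S : set T) (r : R) (a : T -> \bar R) :
  (0 <= r)%R -> (forall i, 0 <= a i) ->
  \esum_(i in S) (r%:E * a i) = r%:E * \esum_(i in S) a i.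
Proof.
move=> r0 a0; rewrite /esum -ereal_supZl //; last first.
  by apply/set0P; exists (\sum_(x \in set0) a x); exists set0 => //; exact: fsets_set0.
congr ereal_sup; apply/seteqP; split => x /=.
  move=> [F [finF FS] <-]; exists (\sum_(x \in F) a x); first by exists F.
  by rewrite !fsbig_finite //= ge0_sume_distrr.
move=> [_ [F [finF FS] <-] <-]; exists F => //.
by rewrite !fsbig_finite //= ge0_sume_distrr.
Qed.

Lemma esumZr (T : choiceType) (S : set T) (r : R) (a : T -> \bar R) :
  (0 <= r)%R -> (forall i, 0 <= a i) ->
  \esum_(i in S) (a i * r%:E) = (\esum_(i in S) a i) * r%:E.
Proof.
by move=> r0 a0; rewrite muleC -esumZl //; apply: eq_esum => i _; rewrite muleC.
Qed.

Lemma esum_swap (T1 T2 : choiceType) (S1 : set T1) (S2 : set T2)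
    (f : T1 -> T2 -> \bar R) : (forall x y, 0 <= f x y) ->
  \esum_(x in S1) \esum_(y in S2) f x y = \esum_(y in S2) \esum_(x in S1) f x y.
Proof.
move=> f0; rewrite (esum_esum (J := fun=> S2)) // (esum_esum (J := fun=> S1)) //.
rewrite (reindex_esum (S2 `*`` fun=> S1) _ (fun x => (x.2, x.1))) //; split => //=.
- by move=> [i j] [/=].
- by move=> [i1 i2] [j1 j2] /= _ _ [] -> ->.
- by move=> [i1 i2] [Pi1 Qi2] /=; exists (i2, i1).
Qed.

Lemma esumT_ge (T : choiceType) (a : T -> \bar R) t :
  (forall i, 0 <= a i) -> a t <= \esum_(i in [set: T]) a i.
Proof.
move=> a0; apply: esum_ge; exists [set t]; first by split => //; exact: finite_set1.
by rewrite fsbig_set1.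
Qed.

Lemma esum_fin_num (T : choiceType) (a : T -> \bar R) t :
  (forall i, 0 <= a i) -> \esum_(i in [set: T]) a i <= 1 -> a t = (fine (a t))%:E.
Proof.
move=> a0 a1; have at1 := le_trans (esumT_ge t a0) a1.
rewrite fineK //; apply/fin_numP; split; apply/negP => /eqP at_oo.
  by have := a0 t; rewrite at_oo.
by move: at1; rewrite at_oo.
Qed.

End ExtendedSums.

Section Shares.
Variable R : realType.
Local Open Scope ring_scope.

Lemma share_ge0 (D q : R) : 0 <= D -> 0 <= q -> 0 <= q / (D + q).
Proof. by move=> D0 q0; rewrite divr_ge0 // addr_ge0. Qed.

Lemma share_le_num (D q c : R) : 0 <= D -> 0 <= q -> q <= c ->
  q / (D + q) <= c / (D + c).
Proof.
move=> D0 q0 qc; have [->|qn0] := eqVneq q 0.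
  by rewrite mul0r divr_ge0 // ?addr_ge0 //; lra.
have qp : 0 < q by rewrite lt0r qn0.
have Dq : 0 < D + q by lra.
have Dc : 0 < D + c by lra.
rewrite ler_pdivrMr // mulrAC ler_pdivlMr //; nra.
Qed.

Lemma share_le_den (D D' q : R) : 0 <= D -> D <= D' -> 0 <= q ->
  q / (D' + q) <= q / (D + q).
Proof.
move=> D0 DD q0; have [->|qn0] := eqVneq q 0; first by rewrite !mul0r.
have qp : 0 < q by rewrite lt0r qn0.
have Dq : 0 < D + q by lra.
have Dq' : 0 < D' + q by lra.
rewrite ler_pdivrMr // mulrAC ler_pdivlMr //; nra.
Qed.

Lemma le_2ln1D (u : R) : 0 <= u <= 1 -> u <= 2 * ln (1 + u).
Proof.
move=> /andP[u0 u1].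
have E0 := expR_gt0 (u / 2).
have E1 := expR_ge1Dx (- (u / 2)); rewrite expRN in E1.
have Eu : expR (u / 2) * (1 - u / 2) <= 1.
  rewrite -[leRHS](@mulfV _ (expR (u / 2))) ?gt_eqF //.
  by apply: ler_wpM2l => //; exact: ltW.
have : ln (expR (u / 2)) <= ln (1 + u) by rewrite ler_ln ?posrE; nra.
rewrite expRK; lra.
Qed.

Lemma share_le_lnD (D d c : R) : 0 <= D -> 0 <= d <= c -> 0 < c ->
  d * (c / (D + c)) <= 2 * c * (ln (D + d + c) - ln (D + c)).
Proof.
move=> D0 /andP[d0 dc] c0; have Dc : 0 < D + c by lra.
have -> : ln (D + d + c) - ln (D + c) = ln (1 + d / (D + c)).
  by rewrite -ln_div ?posrE; try lra; congr ln; field; lra.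
have : d / (D + c) <= 2 * ln (1 + d / (D + c)).
  apply: le_2ln1D; rewrite divr_ge0 ?ler_pdivrMr //=; lra.
move=> h; rewrite mulrCA (mulrC 2) -mulrA; apply: ler_wpM2l => //; lra.
Qed.

Lemma sum_share_le_ln (c : R) (d : nat -> R) (n : nat) :
  0 <= c -> (forall t, (0 < t <= n)%N -> 0 <= d t <= c) ->
  \sum_(1 <= t < n.+1) d t * (c / (\sum_(1 <= i < t) d i + c))
    <= 2 * c * ln (1 + n%:R).
Proof.
move=> c0 dc; have [->|cn0] := eqVneq c 0.
  by rewrite mulr0 mul0r big1 // => t _; rewrite mul0r mulr0.
have cp : 0 < c by rewrite lt0r cn0.
have d_bound i : (0 < i < n.+1)%N -> 0 <= d i <= c.
  by move=> /andP[i0 iT]; apply: dc; rewrite i0 -ltnS.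
pose Ds t := \sum_(1 <= i < t) d i.
have Ds0 t : (t <= n.+1)%N -> 0 <= Ds t.
  move=> tn; rewrite /Ds big_nat_cond; apply: sumr_ge0 => i /andP[/andP[i1 it] _].
  have : (0 < i < n.+1)%N by rewrite i1 (leq_trans it tn).
  by case/d_bound/andP.
have telescope m : (m <= n)%N -> \sum_(1 <= t < m.+1) d t * (c / (Ds t + c))
    <= 2 * c * (ln (Ds m.+1 + c) - ln c).
  elim: m => [_|m IH mn]; first by rewrite big_geq // /Ds big_geq // add0r subrr mulr0.
  have -> : Ds m.+2 = Ds m.+1 + d m.+1 by rewrite /Ds big_nat_recr.
  rewrite big_nat_recr //=.
  have := share_le_lnD (Ds0 _ (leqW mn)) (dc m.+1 mn) cp.
  have := IH (ltnW mn); lra.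
have Dn : Ds n.+1 <= n%:R * c.
  apply: (@le_trans _ _ (\sum_(1 <= i < n.+1) c)); last by rewrite sumr_const_nat subn1 mulr_natl.
  by apply: ler_sum_nat => i /d_bound /andP[].
apply: (le_trans (telescope n (leqnn n))); rewrite -!mulrA; apply: ler_wpM2l; first lra.
apply: ler_wpM2l; first lra.
have D0 := Ds0 _ (leqnn n.+1).
rewrite -ln_div ?posrE; try lra.
rewrite ler_ln ?posrE; [|by apply: divr_gt0; lra|by rewrite ltr_pwDl // ler0n].
rewrite ler_pdivrMr //; nra.
Qed.

(* AM-GM: [2 K <= l K^2 / (D + K) + (D + K) / l], scaled by [w]. *)
Lemma amgm_share (w K D l : R) : 0 <= w -> 0 <= K -> 0 <= D -> 0 < l ->
  2 * (w * K) <= l * (w * K * (K / (D + K))) + (D / l * w + l^-1 * (w * K)).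
Proof.
move=> w0 K0 D0 l0.
suff h : 2 * K <= l * (K * (K / (D + K))) + (D / l + K / l).
  by have := ler_wpM2l w0 h; congr (_ <= _); ring.
have [->|Kn0] := eqVneq K 0.
  by rewrite !(mul0r, mulr0, addr0, add0r); apply: divr_ge0 => //; exact: ltW.
have Kp : 0 < K by rewrite lt0r Kn0.
have DK : 0 < D + K by lra.
have : 0 <= (l * K - (D + K)) ^+ 2 / (l * (D + K)).
  by rewrite divr_ge0 ?sqr_ge0 // mulr_ge0 // ltW.
have -> : (l * K - (D + K)) ^+ 2 / (l * (D + K)) =
          l * (K * (K / (D + K))) + (D / l + K / l) - 2 * K.
  by field; rewrite !gt_eqF.
lra.
Qed.

Lemma sqr_share_mix_le (o p D t n : R) : 0 <= o -> 0 <= p <= 1 -> 0 <= D -> 0 < t ->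
    1 <= n ->
  (o * p) * ((o * p) / (t^-1 * (D * n^-1) + t^-1 * (o * p)))
    <= p * (t * n * (o ^+ 2 / (D + o))).
Proof.
move=> o0 /andP[p0 p1] D0 t0 n1.
have [->|opn0] := eqVneq (o * p) 0.
  have share0 : 0 <= o ^+ 2 / (D + o) by rewrite divr_ge0 ?sqr_ge0 ?addr_ge0.
  by rewrite mul0r; apply: mulr_ge0 => //; apply: mulr_ge0 => //; apply: mulr_ge0; lra.
have o_gt0 : 0 < o by rewrite lt0r o0 andbT; apply: contraNneq opn0 => ->; rewrite mul0r.
have p_gt0 : 0 < p by rewrite lt0r p0 andbT; apply: contraNneq opn0 => ->; rewrite mulr0.
have Dnop : 0 < D + n * (o * p) by nra.
rewrite (_ : _ * (_ / _) = t * n * ((o * p) ^+ 2 / (D + n * (o * p)))); last first.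
  by field; rewrite !gt_eqF //; lra.
rewrite [leRHS]mulrCA ler_wpM2l ?mulr_ge0 //; try lra.
rewrite -subr_ge0 (_ : _ - _ = p * o ^+ 2 * (D + n * (o * p) - p * (D + o))
    / ((D + o) * (D + n * (o * p)))); last by field; rewrite !gt_eqF //; lra.
by rewrite divr_ge0 ?mulr_ge0 ?sqr_ge0 //; nra.
Qed.

End Shares.

Section PushForward.
Variables (R : realType) (X : countType) (A : finType) (J : choiceType) (S : set J).

Definition pairsum (f : J -> A -> R) : \bar R := \esum_(j in S) \sum_(a : A) (f j a)%:E.

Lemma pairsum_ge0 f : (forall j a, (0 <= f j a)%R) -> 0 <= pairsum f.
Proof. by move=> f0; apply: esum_ge0 => j _; apply: sume_ge0 => a _; rewrite lee_fin. Qed.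

Lemma le_pairsum f g : (forall j a, (f j a <= g j a)%R) -> pairsum f <= pairsum g.
Proof. by move=> fg; apply: le_esum => j _; apply: lee_sum => a _; rewrite lee_fin. Qed.

Lemma pairsumD f g : (forall j a, (0 <= f j a)%R) -> (forall j a, (0 <= g j a)%R) ->
  pairsum (fun j a => f j a + g j a)%R = pairsum f + pairsum g.
Proof.
move=> f0 g0; rewrite /pairsum -esumD; last 2 first.
- by move=> j _; apply: sume_ge0 => a _; rewrite lee_fin.
- by move=> j _; apply: sume_ge0 => a _; rewrite lee_fin.
by apply: eq_esum => j _; rewrite -big_split /=; apply: eq_bigr => a _; rewrite EFinD.
Qed.

Lemma pairsumZ (c : R) f : (0 <= c)%R -> (forall j a, (0 <= f j a)%R) ->
  pairsum (fun j a => c * f j a)%R = c%:E * pairsum f.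
Proof.
move=> c0 f0; rewrite /pairsum -esumZl //; last first.
  by move=> j; apply: sume_ge0 => a _; rewrite lee_fin.
apply: eq_esum => j _; rewrite ge0_sume_distrr; last by move=> a _; rewrite lee_fin.
by apply: eq_bigr => a _; rewrite EFinM.
Qed.

Variable K : J -> A -> X -> R.
Hypothesis K_ge0 : forall j a x, (0 <= K j a x)%R.

Definition push_occ (w : J -> A -> R) (x : X) : \bar R :=
  pairsum (fun j a => w j a * K j a x)%R.

Definition push_exp (w : J -> A -> R) (g : X -> R -> \bar R) : \bar R :=
  \esum_(j in S) \sum_(a : A) (w j a)%:E *
     \esum_(x in [set: X]) (K j a x)%:E * g x (K j a x).

Variable w : J -> A -> R.
Hypothesis w_ge0 : forall j a, (0 <= w j a)%R.

Lemma push_occ_ge0 x : 0 <= push_occ w x.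
Proof. by apply: pairsum_ge0 => j a; rewrite mulr_ge0. Qed.

Lemma push_expE g : (forall x q, (0 <= q)%R -> 0 <= g x q) ->
  push_exp w g = \esum_(x in [set: X]) \esum_(j in S) \sum_(a : A)
                   (w j a * K j a x)%:E * g x (K j a x).
Proof.
move=> g0; have term0 j a x : 0 <= (w j a * K j a x)%:E * g x (K j a x).
  by rewrite mule_ge0 ?lee_fin ?g0 ?mulr_ge0.
rewrite -esum_swap; last by move=> j x; exact: sume_ge0.
apply: eq_esum => j _; rewrite esum_sum; last by move=> x a _ _.
apply: eq_bigr => a _; rewrite -esumZl //; last by move=> x; rewrite mule_ge0 ?lee_fin ?g0.
by apply: eq_esum => x _; rewrite EFinM muleA.
Qed.

Lemma le_push_exp g1 g2 : (forall x q, (0 <= q)%R -> g1 x q <= g2 x q) ->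
  push_exp w g1 <= push_exp w g2.
Proof.
move=> g12; apply: le_esum => j _; apply: lee_sum => a _.
apply: lee_wpmul2l; first by rewrite lee_fin.
by apply: le_esum => x _; apply: lee_wpmul2l; rewrite ?lee_fin ?g12.
Qed.

Lemma eq_push_exp g1 g2 : (forall x q, (0 <= q)%R -> g1 x q = g2 x q) ->
  push_exp w g1 = push_exp w g2.
Proof. by move=> e; apply/eqP; rewrite eq_le !le_push_exp // => x q q0; rewrite e. Qed.

Lemma push_expZ (c : R) g : (0 <= c)%R -> (forall x q, (0 <= q)%R -> 0 <= g x q) ->
  push_exp w (fun x q => c%:E * g x q) = c%:E * push_exp w g.
Proof.
move=> c0 g0; have cg0 x q : (0 <= q)%R -> 0 <= c%:E * g x q.
  by move=> q0; rewrite mule_ge0 ?lee_fin ?g0.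
have term0 j a x : 0 <= (w j a * K j a x)%:E * g x (K j a x).
  by rewrite mule_ge0 ?lee_fin ?g0 ?mulr_ge0.
rewrite !push_expE // -esumZl //; last by move=> x; apply: esum_ge0 => j _; exact: sume_ge0.
apply: eq_esum => x _; rewrite -esumZl //; last by move=> j; exact: sume_ge0.
apply: eq_esum => j _; rewrite ge0_sume_distrr => [|a _]; last exact: term0.
by apply: eq_bigr => a _; rewrite muleCA.
Qed.

Lemma push_exp_le g (G : X -> R) : (forall x, (0 <= G x)%R) ->
    (forall x q, (0 <= q)%R -> 0 <= g x q) ->
    (forall j a x, S j -> g x (K j a x) <= (G x)%:E) ->
  push_exp w g <= \esum_(x in [set: X]) push_occ w x * (G x)%:E.
Proof.
move=> G0 g0 gG; rewrite push_expE //; apply: le_esum => x _.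
rewrite /push_occ /pairsum -esumZr //; last first.
  by move=> j; apply: sume_ge0 => a _; rewrite lee_fin mulr_ge0.
apply: le_esum => j Sj; rewrite ge0_sume_distrl; last first.
  by move=> a _; rewrite lee_fin mulr_ge0.
by apply: lee_sum => a _; apply: lee_wpmul2l; rewrite ?lee_fin ?mulr_ge0 ?gG.
Qed.

Hypothesis w_mass : pairsum w <= 1.

Lemma push_occ_le x (c : R) : (0 <= c)%R -> (forall j a, S j -> (K j a x <= c)%R) ->
  push_occ w x <= c%:E.
Proof.
move=> c0 Kc; apply: (@le_trans _ _ (pairsum (fun j a => c * w j a)%R)).
  by apply: le_esum => j Sj; apply: lee_sum => a _; rewrite lee_fin [(c * _)%R]mulrC ler_wpM2l ?Kc.
by rewrite pairsumZ // -[leRHS]mule1 lee_wpmul2l ?lee_fin.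
Qed.

(* Jensen's inequality for the convex map [q |-> q^2 / (D + q)], proved by
   summing [amgm_share] with the optimal parameter [l = (D + o) / o]. *)
Lemma push_occ_sqr_share_le x (D o : R) : (0 <= D)%R -> push_occ w x = o%:E ->
  (o ^+ 2 / (D + o))%:E
    <= pairsum (fun j a => w j a * K j a x * (K j a x / (D + K j a x)))%R.
Proof.
move=> D0 occE; have o0 : (0 <= o)%R by rewrite -lee_fin -occE push_occ_ge0.
set F := (fun j a => w j a * K j a x * (K j a x / (D + K j a x)))%R.
have F0 j a : (0 <= F j a)%R by rewrite /F !mulr_ge0 // invr_ge0 addr_ge0.
have [->|on0] := eqVneq o 0%R; first by rewrite expr0n /= mul0r pairsum_ge0.
have op : (0 < o)%R by rewrite lt0r on0.
set l := ((D + o) / o)%R.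
have lp : (0 < l)%R by rewrite divr_gt0 //; lra.
have wK_sum : pairsum (fun j a => w j a * K j a x)%R = o%:E := occE.
have wK0 j a : (0 <= w j a * K j a x)%R by rewrite mulr_ge0.
have lV0 : (0 <= l^-1)%R by rewrite invr_ge0 ltW.
have Dl0 : (0 <= D / l)%R by rewrite divr_ge0 // ltW.
have amgm_lhs : pairsum (fun j a => 2 * (w j a * K j a x))%R = (2 * o)%:E.
  by rewrite EFinM -wK_sum pairsumZ.
have amgm_rhs : pairsum (fun j a => l * F j a + (D / l * w j a + l^-1 * (w j a * K j a x)))%R
    = l%:E * pairsum F + ((D / l)%:E * pairsum w + (l^-1)%R%:E * o%:E).
  rewrite pairsumD => [|j a|j a]; last 2 first.
  - exact: mulr_ge0 (ltW lp) (F0 j a).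
  - exact: addr_ge0 (mulr_ge0 Dl0 (w_ge0 j a)) (mulr_ge0 lV0 (wK0 j a)).
  rewrite pairsumZ ?(ltW lp) // pairsumD => [|j a|j a]; last 2 first.
  - exact: mulr_ge0 Dl0 (w_ge0 j a).
  - exact: mulr_ge0 lV0 (wK0 j a).
  by rewrite -wK_sum !pairsumZ.
have amgm : (2 * o)%:E <= l%:E * pairsum F + ((D / l)%:E * pairsum w + (l^-1)%R%:E * o%:E).
  by rewrite -amgm_lhs -amgm_rhs; apply: le_pairsum => j a; apply: amgm_share.
have mass : (D / l)%:E * pairsum w <= (D / l)%:E.
  by rewrite -[leRHS]mule1 lee_wpmul2l // lee_fin divr_ge0 // ltW.
move: (pairsum_ge0 F0) amgm; case: (pairsum F) => [s| |]; [|by move=> *; rewrite leey|by []].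
rewrite lee_fin => s0 amgm.
have {}amgm : (2 * o <= l * s + (D / l + l^-1 * o))%R.
  rewrite -lee_fin; apply: (le_trans amgm); rewrite !EFinD !EFinM leeD2l //.
  by rewrite -EFinM leeD2r.
have -> : (o ^+ 2 / (D + o) = o / l)%R by rewrite /l; field; rewrite !gt_eqF //; lra.
have lo : (D / l + l^-1 * o = o)%R by rewrite /l; field; rewrite !gt_eqF //; lra.
by rewrite lee_fin ler_pdivrMr // mulrC; lra.
Qed.

End PushForward.

Section MDPFacts.
Variables (R : realType) (X : countType) (A : finType) (M : mdp R X A).
Hypothesis HM : is_mdp M.

Lemma dist_bound (mu : X -> R) x : is_dist mu -> (0 <= mu x <= 1)%R.
Proof.
move=> [mu0 mu1]; rewrite mu0 /= -lee_fin -mu1.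
by apply: (esumT_ge (a := fun x => (mu x)%:E)) => y; rewrite lee_fin.
Qed.

Lemma dist_inhabited (mu : X -> R) : is_dist mu -> exists x : X, True.
Proof.
move=> [_ mu1]; apply: contrapT => noX.
have X0 : [set: X] = set0 by apply/seteqP; split => // x _; apply: noX; exists x.
by move: mu1; rewrite X0 esum_set0 => -[] /eqP; rewrite eq_sym oner_eq0.
Qed.

Lemma init_bound x : (0 <= init M x <= 1)%R.
Proof. by apply: dist_bound; case: HM. Qed.

Lemma trans_bound k y a x : (0 <= trans M k y a x <= 1)%R.
Proof. by apply: dist_bound; case: HM. Qed.

Lemma Pprev_ge0 h y b x : (0 <= Pprev M h y b x)%R.
Proof.
case: h => [|[|k]] //=; first by case/andP: (init_bound x).
by case/andP: (trans_bound k.+1 y b x).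
Qed.

Lemma policy_bound (pi : policy R X A) k x a : is_policy pi -> (0 <= pi k x a <= 1)%R.
Proof.
move=> /(_ k x) [p0 p1]; rewrite p0 /= -p1.
by rewrite (bigD1 a) //= lerDl sumr_ge0.
Qed.

Lemma occ_succ (pi : policy R X A) k x : occ M pi k.+2 x =
  \esum_(y in [set: X]) \sum_(a : A)
     occ M pi k.+1 y * (pi k.+1 y a)%:E * (trans M k.+1 y a x)%:E.
Proof. by []. Qed.

Lemma occ_subprob (pi : policy R X A) k : is_policy pi ->
  (forall x, 0 <= occ M pi k x) /\ \esum_(x in [set: X]) occ M pi k x <= 1.
Proof.
move=> Hpi; elim: k => [|[|k] [IH0 IH1]]; first by split => //=; rewrite esum1.
  split => [x|] /=; first by rewrite lee_fin; case/andP: (init_bound x).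
  by case: HM => -[_ ->].
have fin y := esum_fin_num y IH0 IH1.
have term0 y a x : 0 <= occ M pi k.+1 y * (pi k.+1 y a)%:E * (trans M k.+1 y a x)%:E.
  have [p0 _] := andP (policy_bound k.+1 y a Hpi).
  have [t0 _] := andP (trans_bound k.+1 y a x).
  by rewrite !mule_ge0 ?lee_fin.
split => [x|]; first by rewrite occ_succ; apply: esum_ge0 => y _; apply: sume_ge0.
under eq_esum do rewrite occ_succ.
rewrite esum_swap; last by move=> x y; exact: sume_ge0.
apply: le_trans IH1; apply: le_esum => y _; rewrite esum_sum; last by move=> x a _ _.
have step a : \esum_(x in [set: X])
    occ M pi k.+1 y * (pi k.+1 y a)%:E * (trans M k.+1 y a x)%:E =
    (fine (occ M pi k.+1 y) * pi k.+1 y a)%:E.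
  have [p0 _] := andP (policy_bound k.+1 y a Hpi).
  rewrite fin -EFinM esumZl ?mulr_ge0 ?fine_ge0 //; last first.
    by move=> x; case/andP: (trans_bound k.+1 y a x).
  by case: HM => _ /(_ k.+1 y a) [_ ->]; rewrite mule1.
rewrite (eq_bigr _ (fun a _ => step a)) sumEFin -mulr_sumr (proj2 (Hpi k.+1 y)).
by rewrite mulr1 -fin.
Qed.

Definition occr (pi : policy R X A) k x : R := fine (occ M pi k x).

Lemma occrE (pi : policy R X A) k x : is_policy pi -> occ M pi k x = (occr pi k x)%:E.
Proof. by move=> Hpi; have [occ0 occ1] := occ_subprob k Hpi; exact: esum_fin_num. Qed.

Lemma occr_bound (pi : policy R X A) k x : is_policy pi -> (0 <= occr pi k x <= 1)%R.
Proof.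
move=> Hpi; have [occ0 occ1] := occ_subprob k Hpi.
by rewrite -!lee_fin -occrE // occ0 (le_trans (esumT_ge x occ0)).
Qed.

Lemma occ_compose (pi pi' : policy R X A) h k x : (k <= h)%N ->
  occ M (compose pi pi' h) k x = occ M pi k x.
Proof.
elim: k x => [|[|k] IH] x kh //; rewrite !occ_succ.
apply: eq_esum => y _; apply: eq_bigr => a _.
by rewrite IH ?(ltnW kh) // /compose kh.
Qed.

(* Layer-[h] quantities are push-forwards, through kernels [K] that are
   transition rows, of weights [w pi] on predecessor state-action pairs; for
   [h = 1] a single dummy predecessor spreads unit mass uniformly over actions. *)
Definition push_decomposition h (J : choiceType) (S : set J) (K : J -> A -> X -> R)
    (w : policy R X A -> J -> A -> R) : Prop :=
  (forall j a x, exists y b, K j a x = Pprev M h y b x) /\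
  forall pi, is_policy pi ->
    [/\ forall j a, (0 <= w pi j a)%R, pairsum S (w pi) <= 1,
        forall x, occ M pi h x = push_occ S K (w pi) x &
        forall g, (forall x q, (0 <= q)%R -> 0 <= g x q) ->
          Epush M pi h g = push_exp S K (w pi) g].

Lemma push_decomposition_succ k :
  push_decomposition k.+2 [set: X] (fun y a x => trans M k.+1 y a x)
    (fun pi y a => occr pi k.+1 y * pi k.+1 y a)%R.
Proof.
split=> [y a x|pi Hpi]; first by exists y, a.
have occE y : occ M pi k.+1 y = (occr pi k.+1 y)%:E by exact: occrE.
split=> [y a|||g _].
- have [occ0 _] := andP (occr_bound k.+1 y Hpi).
  by have [p0 _] := andP (policy_bound k.+1 y a Hpi); rewrite mulr_ge0.
- apply: le_trans (proj2 (occ_subprob k.+1 Hpi)); apply: le_esum => y _.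
  by rewrite sumEFin -mulr_sumr (proj2 (Hpi k.+1 y)) mulr1 occE.
- by move=> x; rewrite occ_succ; apply: eq_esum => y _; apply: eq_bigr => a _; rewrite occE -!EFinM.
- by apply: eq_esum => y _; apply: eq_bigr => a _; rewrite occE -!EFinM.
Qed.

Lemma esum_unit (f : unit -> \bar R) : 0 <= f tt -> \esum_(j in [set: unit]) f j = f tt.
Proof.
move=> f0; rewrite (_ : [set: unit] = [set tt]) ?esum_set1 //.
by apply/seteqP; split => // -[].
Qed.

Hypothesis A_gt0 : (0 < #|A|)%N.

Lemma sum_uniform : (\sum_(a : A) (#|A|%:R : R)^-1 = 1)%R.
Proof.
rewrite sumr_const -(mulr_natr ((#|A|%:R : R)^-1)); apply: mulVf.
by rewrite pnatr_eq0 -lt0n.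
Qed.

Lemma push_decomposition_first :
  push_decomposition 1 [set: unit] (fun _ _ x => init M x)
    (fun _ _ _ => (#|A|%:R)^-1)%R.
Proof.
have uniform_ge0 : (0 <= (#|A|%:R : R)^-1)%R by rewrite invr_ge0 ler0n.
have mass : \sum_(a : A) ((#|A|%:R : R)^-1)%:E = 1 by rewrite sumEFin sum_uniform.
have average (e : \bar R) : 0 <= e -> \sum_(a : A) ((#|A|%:R : R)^-1)%:E * e = e.
  by move=> e0; rewrite -ge0_sume_distrl ?mass ?mul1e // => a _; rewrite lee_fin.
split=> [_ a x|pi _]; first by exists x, a.
split=> [//||x|g g0].
- by rewrite /pairsum esum_unit mass.
- have [init0 _] := andP (init_bound x).
  rewrite /push_occ /pairsum esum_unit; last first.
    by rewrite sume_ge0 // => a _; rewrite lee_fin mulr_ge0.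
  by under eq_bigr do rewrite EFinM; rewrite average.
have Epush0 : 0 <= \esum_(x in [set: X]) (init M x)%:E * g x (init M x).
  by apply: esum_ge0 => x _; rewrite mule_ge0 ?g0 ?lee_fin //; case/andP: (init_bound x).
by rewrite /push_exp esum_unit average // sume_ge0 // => a _; rewrite mule_ge0 ?lee_fin.
Qed.

Lemma push_decomposition_exists h : (0 < h)%N ->
  exists (J : choiceType) (S : set J) K w, push_decomposition h S K w.
Proof.
case: h => [//|[_|k _]]; first by do 4 eexists; exact: push_decomposition_first.
by do 4 eexists; exact: push_decomposition_succ.
Qed.

End MDPFacts.

Section PushCoefficient.
Variables (R : realType) (X : countType) (A : finType) (M : mdp R X A) (h : nat).
Hypothesis HM : is_mdp M.

Definition push_dominated (c : R) (mu : X -> R) : Prop :=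
  forall y b x, (Pprev M h y b x <= c * mu x)%R.

Lemma ratio_lt_le (p m c : R) : (0 <= p)%R -> (0 <= m)%R -> p%:E / m%:E < c%:E ->
  (p <= c * m)%R.
Proof.
move=> p0 m0; have [->|mn0] := eqVneq m 0%R.
  rewrite inve0 mulr0; have [->|pn0] := eqVneq p 0%R; first by rewrite lexx.
  by rewrite gt0_muley ?lte_fin ?lt0r ?pn0.
rewrite inver (negPf mn0) -EFinM lte_fin => lt; apply: ltW.
by rewrite -ltr_pdivrMr // lt0r mn0.
Qed.

Lemma Cpush_ge0 : (0 < #|A|)%N -> 0 <= Cpush M h.
Proof.
case/card_gt0P => a _; apply: le_ereal_inf_tmp => _ [mu mud <-]; have [x _] := dist_inhabited mud.
apply: le_trans (ereal_sup_ubound _); last by exists (x, a, x).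
apply: mule_ge0; first by rewrite lee_fin Pprev_ge0.
by rewrite inve_ge0 lee_fin; case: mud.
Qed.

Lemma Cpush_lt_dominated (c : R) : Cpush M h < c%:E ->
  exists mu, is_dist mu /\ push_dominated c mu.
Proof.
move=> /ereal_inf_lt [_ [mu mud <-] lt]; exists mu; split => // y b x.
apply: ratio_lt_le; [exact: Pprev_ge0|by case: mud|].
by apply: le_lt_trans lt; apply: ereal_sup_ubound; exists (y, b, x).
Qed.

Lemma le_Cpush_affine (V : \bar R) (C a b : R) : Cpush M h = C%:E -> (0 <= C)%R ->
    (0 < a)%R ->
    (forall c mu, (0 <= c)%R -> is_dist mu -> push_dominated c mu -> V <= (a * c + b)%:E) ->
  V <= (a * C + b)%:E.
Proof.
move=> CE C0 a0 HV; apply/lee_addgt0Pr => e e0.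
have ea0 : (0 < e / a)%R by rewrite divr_gt0.
have [|mu [mud dom]] := @Cpush_lt_dominated (C + e / a); first by rewrite CE lte_fin ltrDl.
apply: le_trans (HV _ _ _ mud dom) _; first by rewrite addr_ge0 // ltW.
rewrite -EFinD lee_fin; suff -> : (a * (C + e / a) + b = a * C + b + e)%R by [].
by field; rewrite gt_eqF.
Qed.

Lemma log_bound_arith (C n L1 L2 v : R) : (0 <= C)%R -> (0 <= n)%R -> (0 <= L1 <= L2)%R ->
  (v <= C * L2)%R -> (2 * n * L1 * C + n * v <= 5 * n * L2 * C)%R.
Proof.
move=> C0 n0 /andP[L1_0 L12] vC.
have h1 : (0 <= n * (C * L2 - v))%R by rewrite mulr_ge0 // subr_ge0.
have h2 : (0 <= n * C * (L2 - L1))%R by rewrite !mulr_ge0 // subr_ge0.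
have h3 : (0 <= n * C * L2)%R by rewrite !mulr_ge0 // (le_trans L1_0).
nra.
Qed.

Lemma le_Cpush_log (V : \bar R) (n : R) (T : nat) (eps_opt : R) :
    (0 < #|A|)%N -> (0 < T)%N -> (0 < n)%R ->
    (forall c mu, (0 <= c)%R -> is_dist mu -> push_dominated c mu ->
       V <= (n * (2 * c * ln (1 + T%:R) + T%:R * eps_opt))%:E) ->
    eps_opt%:E <= Cpush M h * ((T%:R)^-1 * ln (2 / (T%:R)^-1))%:E ->
  V <= (5 * n * ln (2 / (T%:R)^-1))%:E * Cpush M h.
Proof.
move=> A_gt0 T0 n0 HV; rewrite invrK => Heps.
have T1 : (1 <= T%:R :> R)%R by rewrite ler1n.
set L1 := ln (1 + T%:R : R); set L2 := ln (2 * T%:R : R).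
have L1_0 : (0 < L1)%R by apply: ln_gt0; lra.
have L12 : (L1 <= L2)%R by rewrite ler_ln ?posrE; lra.
move: (Cpush_ge0 A_gt0) Heps; case E: (Cpush M h) => [C| |] // C0 Heps; last first.
  by rewrite gt0_muley ?leey // lte_fin !mulr_gt0 //; lra.
rewrite lee_fin in C0; rewrite -EFinM lee_fin in Heps.
have TE : (T%:R * eps_opt <= C * L2)%R.
  have := ler_wpM2l (ler0n _ T) Heps.
  suff -> : (T%:R * (C * ((T%:R)^-1 * L2)) = C * L2)%R by [].
  by field; rewrite pnatr_eq0 -lt0n.
apply: le_trans (@le_Cpush_affine V C (2 * n * L1) (n * (T%:R * eps_opt)) E C0 _ _) _.
- by rewrite !mulr_gt0.
- move=> c mu c0 mud dom; apply: le_trans (HV c mu c0 mud dom) _.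
  rewrite lee_fin; suff -> : (n * (2 * c * L1 + T%:R * eps_opt) =
    2 * n * L1 * c + n * (T%:R * eps_opt))%R by [].
  by rewrite /L1; ring.
by rewrite -EFinM lee_fin log_bound_arith // ?(ltW n0) // (ltW L1_0).
Qed.

End PushCoefficient.

Section Rounds.
Variables (R : realType) (X : countType) (A : finType) (M : mdp R X A).
Hypothesis HM : is_mdp M.
Variables (h T : nat) (Pi : set (policy R X A)) (pis : nat -> policy R X A) (eps_opt : R).
Hypothesis Pi_policy : forall pi, Pi pi -> is_policy pi.
Hypothesis round_opt : forall t, (1 <= t <= T)%N ->
  Pi (pis t) /\
  Epush M (pis t) h (round_obj M pis h t) >=
    ereal_sup [set Epush M pi h (round_obj M pis h t) | pi in Pi] - eps_opt%:E.
Variables (J : choiceType) (S : set J) (K : J -> A -> X -> R)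
  (w : policy R X A -> J -> A -> R).
Hypothesis decomp : push_decomposition M h S K w.

Lemma K_dominated c mu : push_dominated M h c mu -> forall j a x, (K j a x <= c * mu x)%R.
Proof. by move=> dom j a x; have [y [b ->]] := proj1 decomp j a x; exact: dom. Qed.

Lemma K_ge0 j a x : (0 <= K j a x)%R.
Proof. by have [y [b ->]] := proj1 decomp j a x; exact: Pprev_ge0. Qed.

Lemma w_ge0 pi : is_policy pi -> forall j a, (0 <= w pi j a)%R.
Proof. by move=> /(proj2 decomp) []. Qed.

Lemma occ_push pi x : is_policy pi -> occ M pi h x = push_occ S K (w pi) x.
Proof. by move=> /(proj2 decomp) [_ _ ->]. Qed.

Lemma Epush_push pi g : is_policy pi -> (forall x q, (0 <= q)%R -> 0 <= g x q) ->
  Epush M pi h g = push_exp S K (w pi) g.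
Proof. by move=> /(proj2 decomp) [_ _ _ EpushE]; exact: EpushE. Qed.

Lemma round_policy t : (1 <= t <= T)%N -> is_policy (pis t).
Proof. by move=> /round_opt [/Pi_policy]. Qed.

Definition occ_round t x : R := occr M (pis t) h x.

Definition occ_cum t x : R := \sum_(1 <= i < t) occ_round i x.

Lemma occ_roundE t x : (1 <= t <= T)%N -> occ M (pis t) h x = (occ_round t x)%:E.
Proof. by move=> /round_policy; exact: occrE. Qed.

Lemma occ_round_ge0 t x : (1 <= t <= T)%N -> (0 <= occ_round t x)%R.
Proof. by move=> /round_policy /(occr_bound HM h x) /andP[]. Qed.

Lemma occ_cum_ge0 t x : (t <= T.+1)%N -> (0 <= occ_cum t x)%R.
Proof.
move=> tT; rewrite /occ_cum big_nat_cond; apply: sumr_ge0 => i /andP[/andP[i1 it] _].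
by rewrite occ_round_ge0 // i1 -ltnS (leq_trans it).
Qed.

Lemma occ_cum_le t x : (1 <= t <= T.+1)%N -> (occ_cum t x <= occ_cum T.+1 x)%R.
Proof.
move=> /andP[t1 tT]; rewrite /occ_cum (@big_cat_nat _ _ _ t _ T.+1) //= lerDl.
rewrite big_nat_cond; apply: sumr_ge0 => i /andP[/andP[ti iT] _].
by rewrite occ_round_ge0 // (leq_trans t1 ti) -ltnS.
Qed.

Lemma round_objE t x q : (t <= T.+1)%N -> (0 <= q)%R ->
  round_obj M pis h t x q = (q / (occ_cum t x + q))%:E.
Proof.
move=> tT q0; have D0 := occ_cum_ge0 x tT.
rewrite /round_obj (_ : \sum_(1 <= i < t) _ = (occ_cum t x)%:E); last first.
  rewrite /occ_cum -sumEFin; apply: eq_big_nat => i /andP[i1 it].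
  by rewrite occ_roundE // i1 -ltnS (leq_trans it).
by rewrite -EFinD ediv_EFin ?addr_ge0 // => s0; lra.
Qed.

Lemma round_obj_ge0 t x q : (t <= T.+1)%N -> (0 <= q)%R -> 0 <= round_obj M pis h t x q.
Proof. by move=> tT q0; rewrite round_objE // lee_fin share_ge0 // occ_cum_ge0. Qed.

Lemma w_mass pi : is_policy pi -> pairsum S (w pi) <= 1.
Proof. by move=> /(proj2 decomp) []. Qed.

Lemma occ_round_dominated t c mu x : (1 <= t <= T)%N -> (0 <= c)%R -> (0 <= mu x)%R ->
  push_dominated M h c mu -> (occ_round t x <= c * mu x)%R.
Proof.
move=> tT c0 mu0 dom; have Hpi := round_policy tT.
rewrite -lee_fin -occ_roundE // occ_push //.
apply: (push_occ_le (w_ge0 Hpi) (w_mass Hpi)); first exact: mulr_ge0.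
by move=> j a _; exact: K_dominated.
Qed.

Lemma Epush_round_le t c mu : (1 <= t <= T)%N -> (0 <= c)%R -> (forall x, (0 <= mu x)%R) ->
    push_dominated M h c mu ->
  Epush M (pis t) h (round_obj M pis h t) <=
    \esum_(x in [set: X]) (occ_round t x * (c * mu x / (occ_cum t x + c * mu x)))%:E.
Proof.
move=> tT c0 mu0 dom; have Hpi := round_policy tT.
have tT1 : (t <= T.+1)%N by case/andP: tT => _ /leqW.
rewrite Epush_push // => [|x q q0]; last exact: round_obj_ge0.
apply: le_trans (push_exp_le K_ge0 (w_ge0 Hpi)
    (G := fun x => c * mu x / (occ_cum t x + c * mu x))%R _ _ _) _.
- by move=> x; rewrite share_ge0 ?occ_cum_ge0 ?mulr_ge0.
- by move=> x q q0; exact: round_obj_ge0.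
- move=> j a x _; rewrite round_objE ?K_ge0 // lee_fin.
  by rewrite share_le_num ?occ_cum_ge0 ?K_ge0 ?K_dominated.
by apply: le_esum => x _; rewrite -occ_push // occ_roundE // -EFinM.
Qed.

Lemma sum_Epush_round_le c mu : (0 <= c)%R -> is_dist mu -> push_dominated M h c mu ->
  \sum_(1 <= t < T.+1)
    \esum_(x in [set: X]) (occ_round t x * (c * mu x / (occ_cum t x + c * mu x)))%:E
  <= (2 * c * ln (1 + T%:R))%:E.
Proof.
move=> c0 [mu0 mu1] dom.
rewrite big_nat_cond -esum_sum; last first.
  move=> x t _ /andP[/andP[t1 tT] _]; rewrite lee_fin mulr_ge0 ?occ_round_ge0 ?t1 //.
  by rewrite share_ge0 ?mulr_ge0 ?occ_cum_ge0 // ltnW.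
have bound0 : (0 <= 2 * c * ln (1 + T%:R))%R by rewrite !mulr_ge0 // ln_ge0 // lerDl.
rewrite -[leRHS]mule1 -mu1 -esumZl => [|//|x]; last by rewrite lee_fin.
apply: le_esum => x _; rewrite -big_nat_cond sumEFin -EFinM lee_fin.
rewrite (_ : 2 * c * ln (1 + T%:R) * mu x = 2 * (c * mu x) * ln (1 + T%:R))%R; last by ring.
apply: sum_share_le_ln; first exact: mulr_ge0.
by move=> t tT; rewrite occ_round_ge0 // occ_round_dominated.
Qed.

Lemma Epush_last_le_round pi t : Pi pi -> (1 <= t <= T)%N ->
  Epush M pi h (round_obj M pis h T.+1) <= Epush M (pis t) h (round_obj M pis h t) + eps_opt%:E.
Proof.
move=> Ppi tT; have Hpi := Pi_policy Ppi.
have tT1 : (t <= T.+1)%N by case/andP: tT => _ /leqW.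
apply: (@le_trans _ _ (Epush M pi h (round_obj M pis h t))).
  rewrite !Epush_push // => [|x q q0|x q q0]; try exact: round_obj_ge0.
  apply: (le_push_exp S K_ge0 (w_ge0 Hpi)) => x q q0; rewrite !round_objE // lee_fin.
  by rewrite share_le_den ?occ_cum_ge0 ?occ_cum_le //; case/andP: tT => ->.
rewrite -leeBlDr //; apply: le_trans (proj2 (round_opt tT)).
by apply: leeB => //; apply: ereal_sup_ubound; exists pi.
Qed.

Lemma Epush_last_round_le pi c mu : Pi pi -> (0 <= c)%R -> is_dist mu ->
    push_dominated M h c mu ->
  (T%:R)%:E * Epush M pi h (round_obj M pis h T.+1)
    <= (2 * c * ln (1 + T%:R))%:E + (T%:R * eps_opt)%:E.
Proof.
move=> Ppi c0 mud dom; set E := Epush M pi h _.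
have -> : (T%:R)%:E * E = \sum_(1 <= t < T.+1) E.
  by rewrite sumr_const_nat subn1 mule_natl.
have -> : (T%:R * eps_opt)%:E = \sum_(1 <= t < T.+1) eps_opt%:E.
  by rewrite sumEFin sumr_const_nat subn1 mulr_natl.
apply: (@le_trans _ _ (\sum_(1 <= t < T.+1)
          (Epush M (pis t) h (round_obj M pis h t) + eps_opt%:E))).
  rewrite big_nat_cond [leRHS]big_nat_cond; apply: lee_sum => t /andP[tT _].
  exact: Epush_last_le_round.
rewrite big_split leeD2r //=; apply: le_trans (sum_Epush_round_le c0 mud dom).
rewrite big_nat_cond [leRHS]big_nat_cond; apply: lee_sum => t /andP[tT _].
by apply: Epush_round_le => //; case: mud.
Qed.

Hypothesis T_gt0 : (0 < T)%N.

Lemma dmix_unif x : dmix M (unif_mix pis T) h x = ((T%:R)^-1 * occ_cum T.+1 x)%:E.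
Proof.
rewrite /dmix /unif_mix big_map.
rewrite (_ : iota 1 T = index_iota 1 T.+1); last by rewrite /index_iota subn1.
rewrite /occ_cum mulr_sumr -sumEFin; apply: eq_big_nat => t; rewrite ltnS => tT.
by rewrite occ_roundE // -EFinM.
Qed.

Lemma push_ratio_unif x q : (0 <= q)%R ->
  q%:E / (dmix M (unif_mix pis T) h x + ((T%:R)^-1 * q)%:E) =
  (T%:R)%:E * round_obj M pis h T.+1 x q.
Proof.
move=> q0; have D0 := occ_cum_ge0 x (leqnn T.+1).
have Tp : (0 < T%:R :> R)%R by rewrite ltr0n.
rewrite dmix_unif round_objE // -EFinD -EFinM.
have [->|qn0] := eqVneq q 0%R; first by rewrite mul0e !mul0r mulr0.
have qp : (0 < q)%R by rewrite lt0r qn0.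
have Tq : (0 < (T%:R)^-1 * occ_cum T.+1 x + (T%:R)^-1 * q)%R.
  by rewrite -mulrDr mulr_gt0 ?invr_gt0 //; lra.
rewrite inver gt_eqF // -EFinM; congr _%:E.
by field; rewrite !gt_eqF //; lra.
Qed.

Lemma Psi_push_unif_le c mu : (0 <= c)%R -> is_dist mu -> push_dominated M h c mu ->
  Psi_push M Pi h (T%:R)^-1 (unif_mix pis T) <= (2 * c * ln (1 + T%:R) + T%:R * eps_opt)%:E.
Proof.
move=> c0 mud dom; apply: ge_ereal_sup => _ [pi Ppi <-]; have Hpi := Pi_policy Ppi.
have obj0 x q : (0 <= q)%R -> 0 <= round_obj M pis h T.+1 x q by exact: round_obj_ge0.
rewrite Epush_push //; last by move=> x q q0; rewrite push_ratio_unif // mule_ge0 ?lee_fin ?obj0.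
rewrite (eq_push_exp S K_ge0 (w_ge0 Hpi) push_ratio_unif) (push_expZ S K_ge0 (w_ge0 Hpi)) ?ler0n //.
by rewrite -Epush_push // EFinD; exact: Epush_last_round_le Ppi c0 mud dom.
Qed.

Lemma occa_unif_after t x a : (1 <= t <= T)%N ->
  occa M (compose (pis t) (@pi_unif R X A) h) h x a = (occ_round t x * (#|A|%:R)^-1)%:E.
Proof.
by move=> tT; rewrite /occa occ_compose // occ_roundE // /compose ltnn /pi_unif -EFinM.
Qed.

Lemma dmixa_unif_after x a : dmixa M (mix_unif_after (unif_mix pis T) h) h x a =
  ((T%:R)^-1 * (occ_cum T.+1 x * (#|A|%:R)^-1))%:E.
Proof.
rewrite /dmixa /mix_unif_after /unif_mix -map_comp big_map.
rewrite (_ : iota 1 T = index_iota 1 T.+1); last by rewrite /index_iota subn1.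
rewrite /occ_cum mulr_suml mulr_sumr -sumEFin; apply: eq_big_nat => t; rewrite ltnS => tT.
by rewrite occa_unif_after // -EFinM.
Qed.

Lemma esum_sqr_share_le_Epush pi : is_policy pi ->
  \esum_(x in [set: X]) (occr M pi h x ^+ 2 / (occ_cum T.+1 x + occr M pi h x))%:E
    <= Epush M pi h (round_obj M pis h T.+1).
Proof.
move=> Hpi; have obj0 x q : (0 <= q)%R -> 0 <= round_obj M pis h T.+1 x q.
  by move=> q0; exact: round_obj_ge0.
rewrite Epush_push // (push_expE S K_ge0 (w_ge0 Hpi)) //.
apply: le_esum => x _.
have occE : push_occ S K (w pi) x = (occr M pi h x)%:E by rewrite -occ_push // occrE.
have D0 := occ_cum_ge0 x (leqnn T.+1).
apply: le_trans (push_occ_sqr_share_le K_ge0 (w_ge0 Hpi) (w_mass Hpi) D0 occE) _.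
apply: le_esum => j _; apply: lee_sum => a _.
by rewrite round_objE ?K_ge0 // -EFinM.
Qed.

Hypothesis A_gt0 : (0 < #|A|)%N.

Lemma Psi_summand_le pi x a : is_policy pi ->
  occa M pi h x a * (occa M pi h x a /
     (dmixa M (mix_unif_after (unif_mix pis T) h) h x a + ((T%:R)^-1)%:E * occa M pi h x a))
  <= (pi h x a * (T%:R * #|A|%:R *
        (occr M pi h x ^+ 2 / (occ_cum T.+1 x + occr M pi h x))))%:E.
Proof.
move=> Hpi; have [occ0 _] := andP (occr_bound HM h x Hpi).
have [p0 p1] := andP (policy_bound h x a Hpi).
have Tp : (0 < T%:R :> R)%R by rewrite ltr0n.
have opT0 : (0 <= (T%:R)^-1 * (occr M pi h x * pi h x a))%R by rewrite !mulr_ge0 // invr_ge0 ltW.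
have DT0 : (0 <= (T%:R)^-1 * (occ_cum T.+1 x * (#|A|%:R)^-1))%R.
  by rewrite !mulr_ge0 ?occ_cum_ge0 // invr_ge0 ?ler0n // ltW.
rewrite /occa occrE // dmixa_unif_after -!EFinM -EFinD ediv_EFin ?mulr_ge0 ?addr_ge0 //.
  rewrite -EFinM lee_fin sqr_share_mix_le ?occ_cum_ge0 ?p0 ?ler1n //.
move=> /eqP; rewrite paddr_eq0 // => /andP[_ /eqP].
by move/eqP; rewrite mulf_eq0 invr_eq0 gt_eqF //= => /eqP.
Qed.

Lemma Psi_unif_after_le c mu : (0 <= c)%R -> is_dist mu -> push_dominated M h c mu ->
  Psi M Pi h (T%:R)^-1 (mix_unif_after (unif_mix pis T) h)
    <= (#|A|%:R * (2 * c * ln (1 + T%:R) + T%:R * eps_opt))%:E.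
Proof.
move=> c0 mud dom; apply: ge_ereal_sup => _ [pi Ppi <-]; have Hpi := Pi_policy Ppi.
have Tn0 : (0 <= T%:R * #|A|%:R :> R)%R by rewrite mulr_ge0 ?ler0n.
pose Q x := (occr M pi h x ^+ 2 / (occ_cum T.+1 x + occr M pi h x))%R.
have Q0 x : (0 <= Q x)%R.
  by rewrite divr_ge0 ?sqr_ge0 ?addr_ge0 ?occ_cum_ge0 //; case/andP: (occr_bound HM h x Hpi).
apply: (@le_trans _ _ (\esum_(x in [set: X]) ((T%:R * #|A|%:R) * Q x)%:E)).
  apply: le_esum => x _; apply: le_trans (lee_sum _ (fun a _ => Psi_summand_le x a Hpi)) _.
  by rewrite sumEFin -mulr_suml (proj2 (Hpi h x)) mul1r.
under eq_esum do rewrite EFinM.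
rewrite esumZl //.
apply: le_trans (lee_wpmul2l _ (esum_sqr_share_le_Epush Hpi)) _; first by rewrite lee_fin.
rewrite [X in X * _]EFinM [X in X * _]muleC -muleA [leRHS]EFinM.
rewrite lee_wpmul2l ?lee_fin ?ler0n // EFinD.
exact: Epush_last_round_le Ppi c0 mud dom.
Qed.

Hypothesis eps_opt_le : eps_opt%:E <= Cpush M h * ((T%:R)^-1 * ln (2 / (T%:R)^-1))%:E.

Lemma Psi_push_unif_le_Cpush :
  Psi_push M Pi h (T%:R)^-1 (unif_mix pis T) <= (5 * ln (2 / (T%:R)^-1))%:E * Cpush M h.
Proof.
rewrite -[X in (X * _)%R]mulr1; apply: le_Cpush_log A_gt0 T_gt0 ltr01 _ eps_opt_le => //.
by move=> c mu c0 mud dom; rewrite mul1r; exact: Psi_push_unif_le c0 mud dom.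
Qed.

Lemma Psi_unif_after_le_Cpush :
  Psi M Pi h (T%:R)^-1 (mix_unif_after (unif_mix pis T) h)
    <= (5 * #|A|%:R * ln (2 / (T%:R)^-1))%:E * Cpush M h.
Proof.
apply: le_Cpush_log A_gt0 T_gt0 _ _ eps_opt_le => //; first by rewrite ltr0n.
by move=> c mu c0 mud dom; exact: Psi_unif_after_le c0 mud dom.
Qed.

End Rounds.

Section Support.
Variables (R : realType) (X : countType) (A : finType).

Lemma supp_unif_mixP (pis : nat -> policy R X A) T pi :
  supp (unif_mix pis T) pi -> exists2 t, (1 <= t <= T)%N & pis t = pi.
Proof.
rewrite /supp /= /unif_mix big_map => pos; apply: contrapT => no_t; move: pos.
rewrite big1_seq ?ltxx // => t /andP[_]; rewrite mem_iota add1n ltnS => tT.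
by case: asboolP => // e; exfalso; apply: no_t; exists t.
Qed.

Lemma supp_unif_mix_sub (Pi : set (policy R X A)) pis T :
  (forall t, (1 <= t <= T)%N -> Pi (pis t)) -> supp (unif_mix pis T) `<=` Pi.
Proof. by move=> HPi pi /supp_unif_mixP [t tT <-]; exact: HPi. Qed.

Lemma supp_unif_mix_card (pis : nat -> policy R X A) T :
  (supp (unif_mix pis T) #<= [set: 'I_T])%card.
Proof.
apply: (@card_le_trans _ _ _ ((fun i : 'I_T => pis i.+1) @` [set: 'I_T])).
  apply: subset_card_le => pi /supp_unif_mixP [t /andP[t1 tT] <-].
  have tT' : (t.-1 < T)%N by rewrite prednK.
  by exists (Ordinal tT') => //=; rewrite prednK.
exact: card_image_le.
Qed.

End Support.

Theorem theorem4p5 (R : realType) (X : countType) (A : finType)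
  (M : mdp R X A) (H h T : nat) (Pi : set (policy R X A))
  (pis : nat -> policy R X A) (eps_opt : R) :
  is_mdp M ->
  (0 < #|A|)%N ->
  (forall pi, Pi pi -> is_policy pi) ->
  (1 <= h <= H)%N ->
  (1 <= T)%N ->
  let eps : R := ((T%:R)^-1)%R in
  (forall t, (1 <= t <= T)%N ->
     Pi (pis t) /\
     Epush M (pis t) h (round_obj M pis h t) >=
       ereal_sup [set Epush M pi h (round_obj M pis h t) | pi in Pi] - eps_opt%:E) ->
  eps_opt%:E <= Cpush M h * (eps * ln (2 / eps))%:E ->
  let p := unif_mix pis T in
  supp p `<=` Pi /\
  (supp p #<= [set: 'I_T])%card /\
  Psi_push M Pi h eps p <= (5 * ln (2 / eps))%:E * Cpush M h /\
  Psi M Pi h eps (mix_unif_after p h) <= (5 * #|A|%:R * ln (2 / eps))%:E * Cpush M h.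
Proof.
move=> HM A_gt0 Pi_policy /andP[h_gt0 _] T_gt0 eps round_opt eps_opt_le p.
have [J [S [K [w decomp]]]] := push_decomposition_exists HM A_gt0 h_gt0.
split; first by apply: supp_unif_mix_sub => t /round_opt [].
split; first exact: supp_unif_mix_card.
split; first exact (Psi_push_unif_le_Cpush HM Pi_policy round_opt decomp T_gt0 A_gt0 eps_opt_le).
exact (Psi_unif_after_le_Cpush HM Pi_policy round_opt decomp T_gt0 A_gt0 eps_opt_le).
Qed.
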